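(* In Ruleset C, for a superposition of $\ell$ distinct single Nim heaps with $k=\max_{1\le j\le\ell} i_j$, \[\langle \mathrm{Nim}(i_1),\ldots,\mathrm{Nim}(i_\ell)\rangle_C\equiv\begin{cases} *k & \text{if } \ell=1,\\ *(k-1) & \text{otherwise.}\end{cases}\]
   Context: Single-heap Nim: $\mathrm{Nim}(x)$ is a heap of $x$ tokens; classical move $(1,-j)$, $j\ge1$, removes $j$ tokens and is illegal if fewer than $j$ tokens remain. Quantum variation: a position is a nonempty finite set $\langle G_1,\ldots,G_n\rangle$ of distinct classical positions; a classical move is legal if legal in some $G_i$; a Q-move is a nonempty set of legal classical moves, leading to the superposition (set) of all legal results of applying one of its moves to one of the $G_i$. Ruleset C (subscript $C$): Q-moves of at least two distinct classical moves are allowed; an unsuperposed (single) move is allowed if and only if it is legal in every $G_i$ of the superposition. The player with no allowed Q-move loses. $\equiv$ is game equivalence, $*k$ the value of a classical Nim heap of $k$ tokens. *)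

From mathcomp Require Import all_boot.
Set Implicit Arguments. Unset Strict Implicit. Unset Printing Implicit Defensive.

Inductive game : Type := Game : seq game -> game.

Definition opts (g : game) : seq game := let: Game l := g in l.

Definition game0 : game := Game [::].

(** A disjunctive sum is a list of components; a move replaces one component
    by one of its options. *)
Definition sum_move (s t : seq game) : Prop :=
  exists2 i, i < size s & exists2 j, j < size (opts (nth game0 s i)) &
    t = set_nth game0 s i (nth game0 (opts (nth game0 s i)) j).

Inductive ppos : seq game -> Prop :=
  PPos s : (forall t, sum_move s t -> exists2 u, sum_move t u & ppos u) -> ppos s.

(** Game equivalence: same outcome in every (impartial) context. For impartial
    games the outcome is determined by being a P-position or not. *)
Definition game_equiv (G H : game) : Prop :=
  forall X : game, ppos [:: G; X] <-> ppos [:: H; X].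

(** Classical Nim heaps: nims n = [:: *0; ...; *(n-1)], nim k = *k. *)
Fixpoint nims (n : nat) : seq game :=
  match n with 0 => [::] | n'.+1 => rcons (nims n') (Game (nims n')) end.
Definition nim (k : nat) : game := Game (nims k).

(* A superposition of single Nim heaps is a nonempty set of heap sizes,
   represented by a duplicate-free seq nat. *)
Definition qmax (S : seq nat) : nat := foldr maxn 0 S.

Fixpoint subseqs (s : seq nat) : seq (seq nat) :=
  match s with
  | [::] => [:: [::]]
  | x :: s' => let r := subseqs s' in map (cons x) r ++ r
  end.

(* candidate Q-moves: nonempty sets M of classical moves j (remove j tokens),
   each legal in some heap of S, i.e. 1 <= j <= max S *)
Definition qmoves (S : seq nat) : seq (seq nat) :=
  [seq M <- subseqs (iota 1 (qmax S)) | M != [::]].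

(* Ruleset C: at least two distinct moves, or a single move legal in every G_i *)
Definition allowedC (S M : seq nat) : bool :=
  (1 < size M) || ((size M == 1) && all (fun x => head 0 M <= x) S).

Definition qresult (S M : seq nat) : seq nat :=
  sort leq (undup (flatten [seq [seq x - j | j <- M & j <= x] | x <- S])).

Fixpoint qgame_fuel (fuel : nat) (S : seq nat) : game :=
  match fuel with
  | 0 => Game [::]
  | f.+1 => Game [seq qgame_fuel f (qresult S M) | M <- qmoves S & allowedC S M]
  end.

(* enough fuel: the maximum heap strictly decreases along any Q-move *)
Definition qgameC (S : seq nat) : game := qgame_fuel (qmax S).+1 S.

From mathcomp Require Import all_boot.
From mathcomp Require Import zify.
Set Implicit Arguments. Unset Strict Implicit. Unset Printing Implicit Defensive.

(* A sum of two impartial games is a P-position iff both have the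
   same Grundy value (Sprague-Grundy), so it suffices to show that the
   superposition S with maximum k has Grundy value k if S = {k} and k - 1
   otherwise.  Every Q-move lowers the maximum, so by induction each option
   has the claimed value.  For S = {k} the unsuperposed moves j reach
   {k - j}, i.e. every value below k.  For |S| >= 2 every allowed Q-move
   leaves two distinct heaps (two moves applied to k, or one move applied to
   k and to another heap), so the option's value is its maximum minus one,
   which is less than k - 1; and the Q-move {k - 1 - m, k} leaves heap 0 and, as
   maximum, heap m + 1, so it has value m. *)

(* Searching [0, size s] suffices: by pigeonhole some n <= size s is not in s. *)
Definition mex (s : seq nat) : nat := find (fun n => n \notin s) (iota 0 (size s).+1).

Lemma mex_notin s : mex s \notin s.
Proof.
have free : has (fun n => n \notin s) (iota 0 (size s).+1).
  apply/negPn/negP => /hasPn all_in.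
  have := uniq_leq_size (iota_uniq 0 (size s).+1) (fun n n_in => negbNE (all_in n n_in)).
  by rewrite size_iota ltnn.
have mex_lt_size : mex s < (size s).+1 by rewrite -[X in _ < X](size_iota 0) -has_find.
by have := nth_find 0 free; rewrite nth_iota.
Qed.

Lemma mex_lt s m : m < mex s -> m \in s.
Proof.
move=> m_lt; have m_lt_size : m < (size s).+1.
  by apply: leq_trans m_lt _; rewrite -[X in _ <= X](size_iota 0) find_size.
by have := before_find 0 m_lt; rewrite nth_iota // add0n => /negbFE.
Qed.

Lemma mex_eq s n : n \notin s -> (forall m, m < n -> m \in s) -> mex s = n.
Proof.
move=> n_notin below_in; apply/eqP; rewrite eqn_leq; apply/andP; split.
  by rewrite leqNgt; apply: contra n_notin => /mex_lt.
by rewrite leqNgt; apply: contra (mex_notin s) => /below_in ->.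
Qed.

Fixpoint depth (g : game) : nat := let: Game l := g in (foldr maxn 0 (map depth l)).+1.
Fixpoint grundy (g : game) : nat := let: Game l := g in mex (map grundy l).
Definition opt (g : game) (j : nat) : game := nth game0 (opts g) j.

Lemma grundyE g : grundy g = mex (map grundy (opts g)).
Proof. by case: g. Qed.

Lemma grundy_opt_neq g j : j < size (opts g) -> grundy (opt g j) != grundy g.
Proof.
move=> j_lt; rewrite [grundy g]grundyE; apply: contraNneq (mex_notin (map grundy (opts g))) => <-.
by rewrite /opt -(nth_map game0 0) // mem_nth ?size_map.
Qed.

Lemma grundy_opt_lt g m :
  m < grundy g -> exists2 j, j < size (opts g) & grundy (opt g j) = m.
Proof.
rewrite grundyE => /mex_lt /(nthP 0) [j]; rewrite size_map => j_lt.
by rewrite (nth_map game0) // => <-; exists j.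
Qed.

Lemma depth_opt g j : j < size (opts g) -> depth (opt g j) < depth g.
Proof.
case: g => l /= j_lt; rewrite ltnS /opt /=.
elim: l j j_lt => [|h l IH] [|j] //= j_lt; first exact: leq_maxl.
exact: leq_trans (IH j j_lt) (leq_maxr _ _).
Qed.

Lemma sum_move2P G X t : sum_move [:: G; X] t ->
  (exists2 j, j < size (opts G) & t = [:: opt G j; X]) \/
  (exists2 j, j < size (opts X) & t = [:: G; opt X j]).
Proof.
by case=> [[|[|i]]] //= _ [j j_lt ->]; [left | right]; exists j.
Qed.

Lemma sum_moveL G X j : j < size (opts G) -> sum_move [:: G; X] [:: opt G j; X].
Proof. by move=> j_lt; exists 0 => //; exists j. Qed.

Lemma sum_moveR G X j : j < size (opts X) -> sum_move [:: G; X] [:: G; opt X j].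
Proof. by move=> j_lt; exists 1 => //; exists j. Qed.

Lemma pposP s :
  ppos s <-> forall t, sum_move s t -> exists2 u, sum_move t u & ppos u.
Proof. by split=> [[] | /PPos]. Qed.

Lemma grundy_eq_opts G X : grundy G = grundy X <->
  (forall j, j < size (opts G) -> grundy (opt G j) != grundy X) /\
  (forall j, j < size (opts X) -> grundy (opt X j) != grundy G).
Proof.
split=> [eGX | [noG noX]].
  by split=> j /grundy_opt_neq; rewrite eGX // eq_sym.
case: (ltngtP (grundy G) (grundy X)) => // [/grundy_opt_lt | /grundy_opt_lt] [j j_lt e].
  by have := noX j j_lt; rewrite e eqxx.
by have := noG j j_lt; rewrite e eqxx.
Qed.

Section GrundyInduction.

Variable n : nat.

Hypothesis ppos_grundy_le : forall G X,
  depth G + depth X <= n -> (ppos [:: G; X] <-> grundy G = grundy X).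

Lemma npos_grundy G X : depth G + depth X <= n.+1 ->
  ((exists2 u, sum_move [:: G; X] u & ppos u) <-> grundy G != grundy X).
Proof.
move=> dGX; split.
  case=> u /sum_move2P [[j j_lt ->] | [j j_lt ->]] ppos_u;
    have := depth_opt j_lt => d_opt.
    have <- : grundy (opt G j) = grundy X by apply/ppos_grundy_le => //; lia.
    by rewrite eq_sym grundy_opt_neq.
  have -> : grundy G = grundy (opt X j) by apply/ppos_grundy_le => //; lia.
  exact: grundy_opt_neq.
case: (ltngtP (grundy G) (grundy X)) => // [/grundy_opt_lt | /grundy_opt_lt] [j j_lt e] _.
  exists [:: G; opt X j]; first exact: sum_moveR.
  by apply/ppos_grundy_le; [have := depth_opt j_lt; lia |].
exists [:: opt G j; X]; first exact: sum_moveL.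
by apply/ppos_grundy_le; [have := depth_opt j_lt; lia |].
Qed.

Lemma ppos_grundy_succ G X : depth G + depth X <= n.+1 ->
  (ppos [:: G; X] <-> grundy G = grundy X).
Proof.
move=> dGX; rewrite grundy_eq_opts; split.
  move/pposP=> ppos_reply; split=> j j_lt; have := depth_opt j_lt => d_opt.
    by apply/npos_grundy; [lia | exact: ppos_reply _ (sum_moveL X j_lt)].
  by rewrite eq_sym; apply/npos_grundy; [lia | exact: ppos_reply _ (sum_moveR G j_lt)].
case=> noG noX; apply/pposP=> t /sum_move2P [[j j_lt ->] | [j j_lt ->]];
  have := depth_opt j_lt => d_opt; apply/npos_grundy; try lia.
  exact: noG.
by rewrite eq_sym; exact: noX.
Qed.

End GrundyInduction.

Lemma ppos_grundy G X : ppos [:: G; X] <-> grundy G = grundy X.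
Proof.
have [n dGX] : exists n, depth G + depth X <= n by exists (depth G + depth X).
elim: n G X dGX => [|n IH] G X dGX; first by case: G dGX.
exact: ppos_grundy_succ IH _ _ dGX.
Qed.

Lemma grundy_equiv G H : grundy G = grundy H -> game_equiv G H.
Proof. by move=> eGH X; rewrite !ppos_grundy eGH. Qed.

Lemma mex_iota n : mex (iota 0 n) = n.
Proof. by apply: mex_eq => [|m]; rewrite mem_iota add0n ?ltnn. Qed.

Lemma map_grundy_nims n : map grundy (nims n) = iota 0 n.
Proof.
elim: n => // n IH; rewrite -[in RHS]addn1 iotaD /= map_rcons IH cats1.
by rewrite /= IH mex_iota.
Qed.

Lemma grundy_nim n : grundy (nim n) = n.
Proof. by rewrite /= map_grundy_nims mex_iota. Qed.

Lemma qmax_cons x S : qmax (x :: S) = maxn x (qmax S).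
Proof. by []. Qed.

Lemma geq_qmax S n : (qmax S <= n) = all (fun x => x <= n) S.
Proof. by elim: S => // x S IH; rewrite qmax_cons geq_max IH. Qed.

Lemma leq_qmax S x : x \in S -> x <= qmax S.
Proof. by move=> xS; have := leqnn (qmax S); rewrite geq_qmax => /allP; apply. Qed.

Lemma qmax_mem (S : seq nat) : S != [::] -> qmax S \in S.
Proof.
elim: S => // x S IH _; rewrite qmax_cons in_cons.
case: S IH => [_ | y S IH]; first by rewrite maxn0 eqxx.
rewrite /maxn; case: ltnP => _; last by rewrite eqxx.
by rewrite IH ?orbT.
Qed.

Lemma mem_subseqs s M : (M \in subseqs s) = subseq M s.
Proof.
elim: s M => [|x s IH] [|y M] //=; rewrite mem_cat IH ?sub0seq ?orbT //.
have [-> | y_neq_x] := eqVneq y x.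
  have cons_inj : injective (cons x) by move=> ? ? [].
  by rewrite (mem_map cons_inj) IH orb_idr // => /cons_subseq.
suff /negbTE -> : y :: M \notin map (cons x) (subseqs s) by [].
by apply/mapP=> -[N _ [y_x _]]; rewrite y_x eqxx in y_neq_x.
Qed.

Lemma mem_qmoves S M : (M \in qmoves S) = (M != [::]) && subseq M (iota 1 (qmax S)).
Proof. by rewrite mem_filter mem_subseqs. Qed.

Lemma qmoves_bound S M j : M \in qmoves S -> j \in M -> 0 < j <= qmax S.
Proof. by rewrite mem_qmoves => /andP [_ /mem_subseq sub] /sub; rewrite mem_iota; lia. Qed.

Lemma qmoves_uniq S M : M \in qmoves S -> uniq M.
Proof. by rewrite mem_qmoves => /andP [_ /subseq_uniq]; apply; exact: iota_uniq. Qed.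

Lemma qmoves1 S j : 0 < j <= qmax S -> [:: j] \in qmoves S.
Proof. by move=> j_bound; rewrite mem_qmoves /= sub1seq mem_iota; lia. Qed.

Lemma qmoves2 S a : 0 < a < qmax S -> [:: a; qmax S] \in qmoves S.
Proof.
move=> a_bound; rewrite mem_qmoves /=.
have k_split : qmax S = (qmax S).-1 + 1 by lia.
rewrite [X in iota 1 X]k_split iotaD.
by apply: (@cat_subseq _ [:: a] [:: qmax S]); rewrite sub1seq mem_iota; lia.
Qed.

Lemma qresultP S M y : y \in qresult S M ->
  exists x j, [/\ x \in S, j \in M, j <= x & y = x - j].
Proof.
rewrite mem_sort mem_undup => /flatten_mapP [x xS /mapP [j]].
by rewrite mem_filter => /andP [j_le jM] ->; exists x, j.
Qed.

Lemma mem_qresult S M x j : x \in S -> j \in M -> j <= x -> x - j \in qresult S M.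
Proof.
move=> xS jM j_le; rewrite mem_sort mem_undup; apply/flatten_mapP.
by exists x => //; apply/mapP; exists j; rewrite ?mem_filter ?j_le.
Qed.

Lemma qresult_uniq S M : uniq (qresult S M).
Proof. by rewrite sort_uniq undup_uniq. Qed.

Lemma qresult1 k j : j <= k -> qresult [:: k] [:: j] = [:: k - j].
Proof. by move=> j_le; rewrite /qresult /= j_le. Qed.

Lemma qresult_neq0 S M : S != [::] -> M \in qmoves S -> qresult S M != [::].
Proof.
case: M => [|j M] S0 MS; first by rewrite mem_qmoves in MS.
have /andP [_ j_le] := qmoves_bound MS (mem_head j M).
by apply: contraTneq (mem_qresult (qmax_mem S0) (mem_head j M) j_le) => ->.
Qed.

Lemma qmax_qresult_lt S M : M \in qmoves S -> qmax (qresult S M) < qmax S.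
Proof.
case: M => [|j M] MS; first by rewrite mem_qmoves in MS.
have := qmoves_bound MS (mem_head j M).
suff : qmax (qresult S (j :: M)) <= (qmax S).-1 by lia.
rewrite geq_qmax; apply/allP => y /qresultP [x [i [xS iM _ ->]]].
by have := leq_qmax xS; have := qmoves_bound MS iM; lia.
Qed.

Definition qvalue (S : seq nat) : nat := if size S == 1 then qmax S else (qmax S).-1.

Definition qoption_values (S : seq nat) : seq nat :=
  [seq qvalue (qresult S M) | M <- qmoves S & allowedC S M].

Lemma qvalue_le S : qvalue S <= qmax S.
Proof. by rewrite /qvalue; case: ifP => // _; exact: leq_pred. Qed.

Lemma qvalue_pred (S : seq nat) y z : y \in S -> z \in S -> y != z -> qvalue S = (qmax S).-1.
Proof. by case: S => [|x [|w S]] //; rewrite !inE => /eqP -> /eqP ->; rewrite eqxx. Qed.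

Lemma uniq_exists_neq (S : seq nat) a : uniq S -> 1 < size S -> exists2 x, x \in S & x != a.
Proof.
case: S => [|x [|y S]] //= /andP [x_notin _] _.
have [x_a | x_neq] := eqVneq x a; last by exists x; rewrite ?mem_head.
exists y; first by rewrite !inE eqxx orbT.
by apply: contraNneq x_notin => y_a; rewrite x_a -y_a mem_head.
Qed.

Lemma allowedC_split S M : uniq S -> 1 < size S -> M \in qmoves S -> allowedC S M ->
  exists y z, [/\ y \in qresult S M, z \in qresult S M & y != z].
Proof.
move=> Su S2; have kS : qmax S \in S by apply: qmax_mem; case: S S2 {Su}.
case: M => [|a [|b M]] MS; first by rewrite mem_qmoves in MS.
  rewrite /allowedC /= => /allP a_le.
  have [x xS x_neq] := uniq_exists_neq (qmax S) Su S2.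
  exists (qmax S - a), (x - a); split; try exact: mem_qresult (mem_head _ _) (a_le _ _).
  by have := a_le _ xS; have := a_le _ kS; lia.
have /andP [_ a_le] := qmoves_bound MS (mem_head _ _).
have /andP [_ b_le] : 0 < b <= qmax S by apply: qmoves_bound MS _; rewrite !inE eqxx orbT.
have a_neq_b : a != b by have := qmoves_uniq MS; rewrite /= inE negb_or => /andP [/andP []].
exists (qmax S - a), (qmax S - b); split.
- exact: mem_qresult kS (mem_head _ _) a_le.
- by apply: mem_qresult kS _ b_le; rewrite !inE eqxx orbT.
- by move: a_neq_b; lia.
Qed.

Lemma qvalue_allowed_lt S M : uniq S -> 1 < size S -> M \in qmoves S -> allowedC S M ->
  qvalue (qresult S M) < (qmax S).-1.
Proof.
move=> Su S2 MS MC; have [y [z [yR zR y_neq_z]]] := allowedC_split Su S2 MS MC.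
rewrite (qvalue_pred yR zR y_neq_z).
by have := qmax_qresult_lt MS; have := leq_qmax yR; have := leq_qmax zR; move: y_neq_z; lia.
Qed.

Lemma qvalue_qresult2 S a : S != [::] -> 0 < a < qmax S ->
  qvalue (qresult S [:: a; qmax S]) = (qmax S - a).-1.
Proof.
move=> S0 a_bound; have kS := qmax_mem S0.
have top : qmax S - a \in qresult S [:: a; qmax S].
  by apply: mem_qresult; rewrite ?mem_head //; lia.
have bot : qmax S - qmax S \in qresult S [:: a; qmax S].
  by apply: mem_qresult; rewrite ?inE ?eqxx ?orbT.
rewrite (qvalue_pred top bot); last lia.
congr _.-1; apply/eqP; rewrite eqn_leq leq_qmax // andbT geq_qmax.
apply/allP => y /qresultP [x [j [xS jM _ ->]]].
by have := leq_qmax xS; move: jM; rewrite !inE => /orP [] /eqP ->; lia.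
Qed.

Lemma mex_qoption_values1 k : mex (qoption_values [:: k]) = k.
Proof.
apply: mex_eq => [|m m_lt].
  apply/mapP => -[M]; rewrite mem_filter => /andP [_ MS] e.
  by have := qvalue_le (qresult [:: k] M); have := qmax_qresult_lt MS; rewrite -e /= maxn0; lia.
apply/mapP; exists [:: k - m].
  by rewrite mem_filter /allowedC /= leq_subr qmoves1 //= maxn0; lia.
by rewrite qresult1 ?leq_subr // /qvalue /= maxn0; lia.
Qed.

Lemma mex_qoption_values2 S : uniq S -> 1 < size S -> mex (qoption_values S) = (qmax S).-1.
Proof.
move=> Su S2; have S0 : S != [::] by case: S S2 {Su}.
apply: mex_eq => [|m m_lt].
  apply/mapP => -[M]; rewrite mem_filter => /andP [MC MS] e.
  by have := qvalue_allowed_lt Su S2 MS MC; rewrite -e ltnn.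
apply/mapP; exists [:: (qmax S).-1 - m; qmax S].
  by rewrite mem_filter qmoves2 //; lia.
by rewrite qvalue_qresult2 //; lia.
Qed.

Lemma mex_qoption_values S : S != [::] -> uniq S -> mex (qoption_values S) = qvalue S.
Proof.
move=> S0 Su; have [S2 | S1] := ltnP 1 (size S).
  by rewrite /qvalue (gtn_eqF S2); exact: mex_qoption_values2.
by case: S S0 Su S1 => [|k [|]] // _ _ _; rewrite mex_qoption_values1 /qvalue /= maxn0.
Qed.

Lemma grundy_qgame_fuel f S : S != [::] -> uniq S -> qmax S < f ->
  grundy (qgame_fuel f S) = qvalue S.
Proof.
elim: f S => // f IH S S0 Su S_lt.
rewrite -mex_qoption_values // /= -map_comp; congr mex; apply/eq_in_map => M.
rewrite mem_filter => /andP [_ MS] /=; apply: IH; first exact: qresult_neq0.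
  exact: qresult_uniq.
by have := qmax_qresult_lt MS; lia.
Qed.

Theorem lemma4 (s : seq nat) :
  s != [::] -> uniq s ->
  game_equiv (qgameC s)
    (nim (if size s == 1 then qmax s else (qmax s).-1)).
Proof.
move=> s0 s_uniq; apply: grundy_equiv; rewrite grundy_nim.
exact: grundy_qgame_fuel.
Qed.
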